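(* Let $G=(\mathbb Z/a_1\mathbb Z)\times\dots\times(\mathbb Z/a_r\mathbb Z)$ be a finite Abelian group with $N=\exp(G)$ odd, and let $f:G\to\mathbb Q$ be rational-valued. Then for every $x\in\operatorname{supp}(\widehat f)$, all denominators below are nonzero and $$\widehat f(x)^{2^{\phi(N)}-1}=\prod_{k=0}^{\phi(N)-1}\left(\frac{\widehat M_3(f;2^kx,2^kx)}{\widehat M_2(f;2^{k+1}x)}\right)^{2^{\phi(N)-1-k}},$$ where $\phi$ is Euler's phi function.
   Context: Elements of $G$ are tuples with componentwise addition modulo $a_k$; $\exp(G)=\min\{n>0: nx=0\ \forall x\in G\}$. Define $\chi(x,y)=\exp\left(2\pi i\sum_{k=1}^r \frac{x[k]y[k]}{a_k}\right)$, $\widehat f(x)=\sum_{y\in G}f(y)\overline{\chi(x,y)}$, and $\operatorname{supp}(\widehat f)=\{x\in G:\widehat f(x)\neq 0\}$. The transformed autocorrelations are $\widehat M_n(f;x_1,\dots,x_{n-1})=\widehat f(x_1)\cdots\widehat f(x_{n-1})\widehat f(-(x_1+\dots+x_{n-1}))$; in particular $\widehat M_3(f;y,y)=\widehat f(y)^2\widehat f(-2y)$ and $\widehat M_2(f;y)=\widehat f(y)\widehat f(-y)$. *)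

From HB Require Import structures.
From mathcomp Require Import all_boot all_order all_algebra.
From mathcomp Require Import reals trigo.
From mathcomp Require Import complex.
Set Implicit Arguments. Unset Strict Implicit. Unset Printing Implicit Defensive.
Import Order.TTheory GRing.Theory Num.Theory.
Local Open Scope ring_scope.

Definition grp (r : nat) (a : 'I_r -> nat) : finType :=
  {dffun forall k : 'I_r, 'I_(a k)}.

Lemma ord_pos n (i : 'I_n) : (0 < n)%N.
Proof. exact: leq_ltn_trans (leq0n i) (ltn_ord i). Qed.

Section Group.
Variables (r : nat) (a : 'I_r -> nat).

Definition gadd (x y : grp a) : grp a :=
  [ffun k => Ordinal (ltn_pmod (x k + y k) (ord_pos (x k)))].
Definition gopp (x : grp a) : grp a :=
  [ffun k => Ordinal (ltn_pmod (a k - x k) (ord_pos (x k)))].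
Definition gscale (n : nat) (x : grp a) : grp a :=
  [ffun k => Ordinal (ltn_pmod (n * x k) (ord_pos (x k)))].
Definition gis0 (x : grp a) : Prop := forall k, nat_of_ord (x k) = 0%N.

Definition is_exponent (N : nat) : Prop :=
  (0 < N)%N /\ (forall x : grp a, gis0 (gscale N x)) /\
  (forall n, (0 < n)%N -> (forall x : grp a, gis0 (gscale n x)) -> (N <= n)%N).

Variable R : realType.

Definition chi (x y : grp a) : R[i] :=
  let t := 2 * pi * \sum_(k < r) ((x k * y k)%:R / (a k)%:R) in
  Complex (cos t) (sin t).

Definition fhat (f : grp a -> rat) (x : grp a) : R[i] :=
  \sum_(y : grp a) ratr (f y) * (chi x y)^*.

Definition Mhat3 (f : grp a -> rat) (y1 y2 : grp a) : R[i] :=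
  fhat f y1 * fhat f y2 * fhat f (gopp (gadd y1 y2)).
Definition Mhat2 (f : grp a -> rat) (y : grp a) : R[i] :=
  fhat f y * fhat f (gopp y).

End Group.

From mathcomp Require Import all_boot all_order all_algebra.
From mathcomp Require Import cyclic algC cyclotomic.
From mathcomp Require Import reals trigo.
From mathcomp Require Import complex.
From mathcomp Require Import ring.
Set Implicit Arguments.
Unset Strict Implicit.
Unset Printing Implicit Defensive.

Import Order.TTheory GRing.Theory Num.Theory.
Local Open Scope ring_scope.

(** With omega = exp(-2 pi i / N), every value fhat f (k x) is Q(omega ^ k) for
    one polynomial Q with rational coefficients. Since the cyclotomic
    polynomials are irreducible over Q, Q(omega) <> 0 forces Q(omega ^ k) <> 0
    for every k prime to N. As N is odd, this covers k = 2^j and k = -2^j, so all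
    the quotients are defined and the k-th one equals F_k^2 / F_(k+1), where
    F_j = fhat f (2^j x). The product telescopes to F_0^(2^phi(N)) / F_phi(N),
    and F_phi(N) = F_0 because 2^phi(N) = 1 mod N. *)

Lemma map_ratr_Phi (K : numFieldType) n :
  map_poly (ratr : rat -> K) (map_poly intr 'Phi_n) = map_poly intr 'Phi_n.
Proof. by rewrite -map_poly_comp; apply: eq_map_poly => b /=; rewrite rmorph_int. Qed.

Lemma root_Phi_prim (K : idomainType) n (w : K) :
  n.-primitive_root w -> root (map_poly intr 'Phi_n) w.
Proof.
move=> prim_w; have n_gt0 := prim_order_gt0 prim_w.
have Xn1_map m : map_poly (intr : int -> K) ('X^m - 1) = 'X^m - 1.
  by rewrite rmorphB rmorph1 /= map_polyXn.
have : root (map_poly intr ('X^n - 1)) w.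
  by rewrite Xn1_map rootE !hornerE prim_expr_order ?subrr.
rewrite -(prod_Cyclotomic n_gt0) rmorph_prod rootE horner_prod.
rewrite prodf_seq_eq0 => /hasP[d]; rewrite -dvdn_divisors // => d_dvd_n /= Phi_d_w.
have d_gt0 : (0 < d)%N by apply: dvdn_gt0 d_dvd_n.
suff <- : d = n by [].
apply/eqP; rewrite eqn_dvd d_dvd_n (prim_order_dvd prim_w).
have : root (map_poly intr ('X^d - 1)) w.
  rewrite -(prod_Cyclotomic d_gt0) (big_rem d) ?divisors_id //= rmorphM /=.
  by rewrite rootM; apply/orP; left.
by rewrite Xn1_map rootE !hornerE subr_eq0.
Qed.

Lemma prim_root_Phi_dvdp (K : numFieldType) n (w : K) (q : {poly rat}) :
  n.-primitive_root w -> root (map_poly ratr q) w -> map_poly intr 'Phi_n %| q.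
Proof.
move=> prim_w qw; have n_gt0 := prim_order_gt0 prim_w.
set Phi : {poly rat} := map_poly intr 'Phi_n.
have Phi_neq0 : Phi != 0 by rewrite monic_neq0 ?monic_map ?Cyclotomic_monic.
pose g := gcdp q Phi.
have g_neq0 : g != 0 by rewrite gcdp_eq0 negb_and Phi_neq0 orbT.
have gw : root (map_poly (ratr : rat -> K) g) w.
  by rewrite gcdp_map root_gcd qw map_ratr_Phi root_Phi_prim.
have g_size : size (map_poly (ratr : rat -> algC) g) != 1%N.
  have gK_neq0 : map_poly (ratr : rat -> K) g != 0 by rewrite map_poly_eq0.
  have := root_size_gt1 gK_neq0 gw.
  by rewrite !size_map_poly neq_ltn => ->; rewrite orbT.
(* In algC, a root z of g is a primitive n-th root, and Phi_n is the minimal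
   polynomial of z over Q. *)
have [z gz] := closed_rootP _ g_size.
have [z0 prim_z0] := C_prim_root_exists n_gt0.
have prim_z : n.-primitive_root z.
  rewrite -(root_cyclotomic prim_z0) -(Cintr_Cyclotomic prim_z0) -map_ratr_Phi.
  by apply: root_dvdp gz; rewrite dvdp_map dvdp_gcdr.
have [p [p_min _] p_dvdp] := minCpolyP z.
have -> : Phi = p.
  apply: (map_inj_poly (fmorph_inj (ratr : rat -> algC))); first exact: rmorph0.
  by rewrite -p_min (minCpoly_cyclotomic prim_z) -(Cintr_Cyclotomic prim_z) /Phi map_ratr_Phi.
by apply: dvdp_trans (dvdp_gcdl q Phi); rewrite -p_dvdp.
Qed.

Lemma root_exp_coprime (K : numFieldType) N (w : K) (q : {poly rat}) k :
  (0 < N)%N -> w ^+ N = 1 -> coprime k N ->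
  root (map_poly ratr q) (w ^+ k) -> root (map_poly ratr q) w.
Proof.
move=> N_gt0 wN1 coprime_k_N qwk.
have [M prim_w M_dvd_N] := prim_order_exists N_gt0 wN1.
have prim_wk : M.-primitive_root (w ^+ k).
  by rewrite prim_root_exp_coprime // (coprime_dvdr M_dvd_N).
apply: (@root_dvdp _ (map_poly intr 'Phi_M)); last exact: root_Phi_prim.
by rewrite -map_ratr_Phi dvdp_map (prim_root_Phi_dvdp prim_wk qwk).
Qed.

Section GroupArithmetic.
Variables (r : nat) (a : 'I_r -> nat).
Implicit Types x y : grp a.

Lemma gscaleE n x k : gscale n x k = (n * x k %% a k)%N :> nat.
Proof. by rewrite ffunE. Qed.

Lemma gscale1 x : gscale 1 x = x.
Proof. by apply/ffunP => k; apply: val_inj => /=; rewrite gscaleE mul1n modn_small. Qed.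

Lemma gscaleA m n x : gscale m (gscale n x) = gscale (m * n) x.
Proof. by apply/ffunP => k; apply: val_inj => /=; rewrite !gscaleE modnMmr mulnA. Qed.

Lemma gadd_gscale m n x : gadd (gscale m x) (gscale n x) = gscale (m + n) x.
Proof.
by apply/ffunP => k; apply: val_inj; rewrite /= ffunE /= !gscaleE modnDm mulnDl.
Qed.

Lemma exponent_dvdn N :
  (forall k, 0 < a k)%N -> is_exponent a N -> forall k, (a k %| N)%N.
Proof.
move=> a_gt0 [_ [N_annihilates _]] k.
pose one : grp a := [ffun j => Ordinal (ltn_pmod 1 (a_gt0 j))].
have := N_annihilates one k; rewrite gscaleE ffunE /= => Nmod.
by rewrite /dvdn -[N]muln1 -modnMmr Nmod.
Qed.

Variable N : nat.
Hypotheses (N_gt0 : (0 < N)%N) (a_dvdn_N : forall k, (a k %| N)%N).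

Lemma gscale_modN m n x : m = n %[mod N] -> gscale m x = gscale n x.
Proof.
move=> mn; apply/ffunP => k; apply: val_inj => /=; rewrite !gscaleE.
by rewrite -modnMml -(modn_dvdm m (a_dvdn_N k)) mn modn_dvdm // modnMml.
Qed.

Lemma goppE y : gopp y = gscale N.-1 y.
Proof.
apply/ffunP => k; apply: val_inj; rewrite /= ffunE gscaleE /=; apply/eqP.
rewrite -(eqn_modDr (y k)) subnK ?(ltnW (ltn_ord (y k))) // -mulSnr prednK //.
rewrite modnn eq_sym; exact: dvdn_mulr.
Qed.

End GroupArithmetic.

Section Fourier.
Variable R : realType.

Definition expi (t : R) : R[i] := Complex (cos t) (sin t).

Lemma expiD s t : expi (s + t) = expi s * expi t.
Proof.
rewrite /expi cosD sinD; apply/eqP; rewrite eq_complex /=.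
by apply/andP; split; apply/eqP; ring.
Qed.

Lemma expiM_natl m t : expi (m%:R * t) = expi t ^+ m.
Proof.
elim: m => [|m IHm]; first by rewrite mul0r /expi cos0 sin0.
by rewrite exprS -IHm -expiD mulrSr mulrDl mul1r addrC.
Qed.

Lemma conj_expi t : (expi t)^* = expi (- t).
Proof. by rewrite /expi cosN sinN. Qed.

Variables (r : nat) (a : 'I_r -> nat) (N : nat).
Hypotheses (N_gt0 : (0 < N)%N) (a_dvdn_N : forall k, (a k %| N)%N).
Implicit Types (x y : grp a) (f : grp a -> rat).

Definition pairing x y : nat := \sum_(k < r) x k * y k * (N %/ a k).

Definition omega : R[i] := expi (- (2 * pi / N%:R)).

Lemma omega_unity : omega ^+ N = 1.
Proof.
rewrite -expiM_natl mulrN mulrCA divff ?pnatr_eq0 -?lt0n // mulr1.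
by rewrite /expi mulr_natl cosN sinN cos2pi sin2pi oppr0.
Qed.

Lemma conj_chi x y : (chi R x y)^* = omega ^+ pairing x y.
Proof.
rewrite -expiM_natl mulrN -conj_expi; congr (_^*).
have -> : chi R x y = expi (2 * pi * \sum_(k < r) ((x k * y k)%:R / (a k)%:R)) by [].
congr expi.
rewrite /pairing natr_sum mulr_suml mulr_sumr; apply: eq_bigr => k _.
have a_gt0 : (0 < a k)%N := ord_pos (x k).
have a_neq0 : (a k)%:R != 0 :> R by rewrite pnatr_eq0 -lt0n.
have Na_neq0 : (N %/ a k)%:R != 0 :> R.
  by rewrite pnatr_eq0 -lt0n divn_gt0 // dvdn_leq.
have -> : N%:R = (N %/ a k)%:R * (a k)%:R :> R by rewrite -natrM divnK.
by rewrite !natrM; field; rewrite a_neq0 Na_neq0.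
Qed.

Lemma pairing_gscale k x y : pairing (gscale k x) y = k * pairing x y %[mod N].
Proof.
rewrite /pairing big_distrr -[in LHS]modn_summ -[in RHS]modn_summ.
congr (_ %% N)%N; apply: eq_bigr => i _.
have aNa : (a i * (N %/ a i))%N = N by rewrite mulnC divnK.
rewrite gscaleE -mulnA muln_modl [(a i * _)%N]mulnCA aNa.
by rewrite (modn_dvdm _ (dvdn_mull _ (dvdnn N))) /= !mulnA.
Qed.

Definition fourier_poly f x : {poly rat} := \sum_y f y *: 'X^(pairing x y).

Lemma fhat_gscale f k x :
  fhat R f (gscale k x) = (map_poly ratr (fourier_poly f x)).[omega ^+ k].
Proof.
rewrite /fhat rmorph_sum horner_sum; apply: eq_bigr => y _.
rewrite conj_chi /= map_polyZ map_polyXn hornerZ hornerXn -exprM.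
by rewrite -(expr_mod _ omega_unity) pairing_gscale expr_mod // omega_unity.
Qed.

Lemma fhat_gscale_neq0 f k x :
  coprime k N -> fhat R f x != 0 -> fhat R f (gscale k x) != 0.
Proof.
move=> coprime_k_N; rewrite -[x in fhat R f x]gscale1 !fhat_gscale expr1.
by apply: contra; apply: root_exp_coprime N_gt0 omega_unity coprime_k_N.
Qed.

End Fourier.

Lemma Mhat3_div_Mhat2 (R : realType) r (a : 'I_r -> nat) (f : grp a -> rat) y :
  fhat R f (gopp (gadd y y)) != 0 ->
  Mhat3 R f y y / Mhat2 R f (gadd y y) = fhat R f y ^+ 2 / fhat R f (gadd y y).
Proof.
move=> opp_neq0; rewrite /Mhat3 /Mhat2 invfM mulrA -expr2.
by rewrite [fhat R f y ^+ 2 * _ / _]mulrAC mulfK.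
Qed.

Lemma telescope_sqr_div (K : fieldType) (F : nat -> K) n :
  (forall j, F j != 0) ->
  \prod_(k < n) (F k ^+ 2 / F k.+1) ^+ (2 ^ (n - 1 - k)) = F 0%N ^+ (2 ^ n) / F n.
Proof.
move=> F_neq0; elim: n => [|n IHn]; first by rewrite big_ord0 expn0 expr1 divff.
rewrite big_ord_recr /= subn1 subnn expn0 expr1.
rewrite (eq_bigr (fun k : 'I_n => ((F k ^+ 2 / F k.+1) ^+ (2 ^ (n - 1 - k))) ^+ 2)); last first.
  by move=> k _; rewrite -exprM -expnSr -subnDA add1n subnSK.
rewrite prodrXl IHn expnS mulnC exprM.
by field; rewrite !F_neq0.
Qed.

Theorem theorem3 (R : realType) (r : nat) (a : 'I_r -> nat)
  (ha : forall k, (0 < a k)%N) (N : nat) (hN : is_exponent a N) (hodd : odd N)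
  (f : grp a -> rat) (x : grp a) (hx : fhat R f x != 0) :
  (forall k : nat, (k < totient N)%N -> Mhat2 R f (gscale (2 ^ k.+1) x) != 0) /\
  fhat R f x ^+ (2 ^ totient N).-1 =
  \prod_(k < totient N)
     (Mhat3 R f (gscale (2 ^ k) x) (gscale (2 ^ k) x)
        / Mhat2 R f (gscale (2 ^ k.+1) x)) ^+ (2 ^ (totient N - 1 - k)).
Proof.
have [N_gt0 _] := hN; have a_dvdn_N := exponent_dvdn ha hN.
have coprime_2_N : coprime 2 N by rewrite coprime2n.
have scale_neq0 k : coprime k N -> fhat R f (gscale k x) != 0.
  by move=> coprime_k_N; exact: (fhat_gscale_neq0 (R := R) N_gt0 a_dvdn_N coprime_k_N hx).
pose F j := fhat R f (gscale (2 ^ j) x).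
have F_neq0 j : F j != 0 by rewrite scale_neq0 ?coprimeXl.
have opp_neq0 j : fhat R f (gopp (gscale (2 ^ j) x)) != 0.
  by rewrite (goppE N_gt0 a_dvdn_N) gscaleA scale_neq0 // coprimeMl coprimePn ?coprimeXl.
have double k : gadd (gscale (2 ^ k) x) (gscale (2 ^ k) x) = gscale (2 ^ k.+1) x.
  by rewrite gadd_gscale addnn -mul2n -expnS.
have ratio k : Mhat3 R f (gscale (2 ^ k) x) (gscale (2 ^ k) x)
    / Mhat2 R f (gscale (2 ^ k.+1) x) = F k ^+ 2 / F k.+1.
  by rewrite -double (@Mhat3_div_Mhat2 R) double // double.
split=> [k _|]; first exact: mulf_neq0 (F_neq0 k.+1) (opp_neq0 k.+1).
under eq_bigr => k _ do rewrite ratio.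
rewrite telescope_sqr_div //.
have -> : F (totient N) = F 0%N.
  by rewrite /F (gscale_modN a_dvdn_N x (Euler_exp_totient coprime_2_N)).
by rewrite /F expn0 gscale1 -subn1 expfB_cond ?(negPf hx) ?expn_gt0 // expr1.
Qed.
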